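(* Let $X=\varprojlim X_np_n$ be a reduced regular projective limit of vector lattices, $X_0\subset X$ a vector subspace, $q_1\colon X_1\to\mathbb R$ increasing and concave, $q:=q_1\circ\operatorname{pr}_1$, $H\subset X$ convex, $H_n:=\operatorname{pr}_nH$. Assume: (ii) for each $n$, $H_n$ is minorizing for $\operatorname{pr}_nX_0$; (v) for every decreasing sequence $(h^{(k)})\subset H$ with $\inf_kq(h^{(k)})\in\mathbb R$, the sequence is bounded below in $X$ and $q(\inf_kh^{(k)})\ge\inf_kq(h^{(k)})$; (iii–iv) for every sequence $(h^{(k)})\subset H$ bounded in $X$, $\limsup_kh^{(k)}:=\inf_n\sup_{k\ge n}h^{(k)}$ exists and belongs to $H$. Then $\mathrm{spf}_{H,q}$ is a concave function with values in $\mathbb R\cup\{-\infty\}$, and for all $x\in X_0$ $$\mathrm{spf}_{H,q}(x)=\inf\{a(x):\ a\in L,\ q(h)\le a(x')\ \text{for all }h\in H,\ x'\in X_0,\ h\le x'\}$$ where $L$ is the set of all affine functions $X_0\to\mathbb R$. If moreover $0\in H$ and $q_1(0)\ge0$, then $\mathrm{spf}_{H,q}$ is positive and $L$ may be replaced by $\{l+c:\ l\colon X_0\to\mathbb R\text{ positive linear},\ c\in\mathbb R,\ c\ge0\}$.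
   Context: All vector spaces are real. Projective limit: for ordered vector spaces $(X_n,\le_n)$ and positive linear $p_n\colon X_{n+1}\to X_n$, $X=\varprojlim X_np_n=\{x=(x_n)\in\prod X_n:\ x_n=p_n(x_{n+1})\ \forall n\}$ with coordinatewise order, $\operatorname{pr}_nx=x_n$; regular if all $X_n$ are vector lattices and each $p_n$ preserves suprema of finite sets; reduced if $\operatorname{pr}_nX=X_n$ for all $n$. A set $G\subset X_n$ is minorizing for $Y$ if each $y\in Y$ has some $g\in G$ with $g\le_ny$. Supremal function: $\mathrm{spf}_{H,q}(x)=\sup\{q(h):\ h\in H,\ h\le x\}$, $\sup\varnothing=-\infty$. A function $a$ on a vector space is affine if $a(tx_1+(1-t)x_2)=ta(x_1)+(1-t)a(x_2)$ for all $x_1,x_2$, $t\in\mathbb R$. Positive: $g(x)\ge0$ for $x\ge0$. *)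

From Stdlib Require Import Reals Lra Classical ClassicalEpsilon.
Open Scope R_scope.
Set Implicit Arguments.

Inductive Rbar : Type := Fin (r : R) | p_infty | m_infty.

Definition Rbar_le (a b : Rbar) : Prop :=
  match a, b with
  | m_infty, _ => True
  | _, p_infty => True
  | Fin x, Fin y => x <= y
  | _, _ => False
  end.

(* addition; -oo is absorbing (only used for values that are not +oo) *)
Definition Rbar_plus (a b : Rbar) : Rbar :=
  match a, b with
  | m_infty, _ | _, m_infty => m_infty
  | p_infty, _ | _, p_infty => p_infty
  | Fin x, Fin y => Fin (x + y)
  end.

(* multiplication by a scalar t >= 0, with the convention 0 * (+-oo) = 0 *)
Definition Rbar_scal (t : R) (a : Rbar) : Rbar :=
  match a with
  | Fin x => Fin (t * x)
  | _ => if Req_EM_T t 0 then Fin 0 else a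
  end.

Definition is_sup_Rbar (S : R -> Prop) (s : Rbar) : Prop :=
  (forall r, S r -> Rbar_le (Fin r) s) /\
  (forall u, (forall r, S r -> Rbar_le (Fin r) u) -> Rbar_le s u).

Definition is_inf_Rbar (S : R -> Prop) (s : Rbar) : Prop :=
  (forall r, S r -> Rbar_le s (Fin r)) /\
  (forall u, (forall r, S r -> Rbar_le u (Fin r)) -> Rbar_le u s).

(* sup / inf in R ∪ {±oo}; sup ∅ = -oo, inf ∅ = +oo *)
Definition Rbar_sup (S : R -> Prop) : Rbar :=
  epsilon (inhabits m_infty) (is_sup_Rbar S).
Definition Rbar_inf (S : R -> Prop) : Rbar :=
  epsilon (inhabits p_infty) (is_inf_Rbar S).

Record VL := mkVL {
  car :> Type;
  vadd : car -> car -> car;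
  vscal : R -> car -> car;
  vzero : car;
  vle : car -> car -> Prop;
  vjoin : car -> car -> car;
  vadd_assoc : forall x y z, vadd x (vadd y z) = vadd (vadd x y) z;
  vadd_comm : forall x y, vadd x y = vadd y x;
  vadd_0 : forall x, vadd x vzero = x;
  vadd_opp : forall x, vadd x (vscal (-1) x) = vzero;
  vscal_1 : forall x, vscal 1 x = x;
  vscal_assoc : forall a b x, vscal a (vscal b x) = vscal (a * b) x;
  vscal_distr_v : forall a x y, vscal a (vadd x y) = vadd (vscal a x) (vscal a y);
  vscal_distr_s : forall a b x, vscal (a + b) x = vadd (vscal a x) (vscal b x);
  vle_refl : forall x, vle x x;
  vle_antisym : forall x y, vle x y -> vle y x -> x = y;
  vle_trans : forall x y z, vle x y -> vle y z -> vle x z;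
  vle_add : forall x y z, vle x y -> vle (vadd x z) (vadd y z);
  vle_scal : forall a x y, 0 <= a -> vle x y -> vle (vscal a x) (vscal a y);
  vjoin_ub1 : forall x y, vle x (vjoin x y);
  vjoin_ub2 : forall x y, vle y (vjoin x y);
  vjoin_least : forall x y z, vle x z -> vle y z -> vle (vjoin x y) z
}.

Arguments vzero : clear implicits.
Arguments vadd {v} _ _.
Arguments vscal {v} _ _.
Arguments vle {v} _ _.
Arguments vjoin {v} _ _.

Definition pos_linear_map (A B : VL) (f : A -> B) : Prop :=
  (forall x y, f (vadd x y) = vadd (f x) (f y)) /\
  (forall a x, f (vscal a x) = vscal a (f x)) /\
  (forall x, vle (vzero A) x -> vle (vzero B) (f x)).

Arguments pos_linear_map {A B} f.

Section Lim.
Variable Xs : nat -> VL.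
Variable p : forall n, Xs (S n) -> Xs n.

Definition prodX := forall n, Xs n.

Definition inLim (x : prodX) : Prop := forall n, x n = p n (x (S n)).

(* regular: the X_n are vector lattices (built into VL), each p_n is positive
   linear and preserves suprema of finite sets (binary joins) *)
Definition regular : Prop :=
  forall n, pos_linear_map (p n) /\
    forall x y, p n (vjoin x y) = vjoin (p n x) (p n y).

Definition reduced : Prop :=
  forall n (y : Xs n), exists x, inLim x /\ x n = y.

Definition Xzero : prodX := fun n => vzero (Xs n).
Definition Xadd (x y : prodX) : prodX := fun n => vadd (x n) (y n).
Definition Xscal (t : R) (x : prodX) : prodX := fun n => vscal t (x n).
Definition Xle (x y : prodX) : Prop := forall n, vle (x n) (y n).

Definition is_sup_X (A : prodX -> Prop) (s : prodX) : Prop :=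
  inLim s /\ (forall z, A z -> Xle z s) /\
  (forall b, inLim b -> (forall z, A z -> Xle z b) -> Xle s b).

Definition is_inf_X (A : prodX -> Prop) (g : prodX) : Prop :=
  inLim g /\ (forall z, A z -> Xle g z) /\
  (forall b, inLim b -> (forall z, A z -> Xle b z) -> Xle b g).

Definition subspace (Y : prodX -> Prop) : Prop :=
  (forall x, Y x -> inLim x) /\ Y Xzero /\
  (forall x y, Y x -> Y y -> Y (Xadd x y)) /\
  (forall t x, Y x -> Y (Xscal t x)).

Definition convex_subset (H : prodX -> Prop) : Prop :=
  (forall h, H h -> inLim h) /\
  (forall h1 h2 t, H h1 -> H h2 -> 0 <= t <= 1 ->
     H (Xadd (Xscal t h1) (Xscal (1 - t) h2))).

(* q := q1 o pr_1  (first space indexed by 0) *)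
Definition qof (q1 : Xs 0 -> R) (x : prodX) : R := q1 (x O).

Definition spf (H : prodX -> Prop) (q : prodX -> R) (x : prodX) : Rbar :=
  Rbar_sup (fun r => exists h, H h /\ Xle h x /\ r = q h).

Definition concave_Rbar (f : prodX -> Rbar) : Prop :=
  forall x y t, inLim x -> inLim y -> 0 <= t <= 1 ->
    Rbar_le (Rbar_plus (Rbar_scal t (f x)) (Rbar_scal (1 - t) (f y)))
            (f (Xadd (Xscal t x) (Xscal (1 - t) y))).

(* affine functions X_0 -> R (represented on the ambient space; only the
   values on Y matter) *)
Definition affine_on (Y : prodX -> Prop) (a : prodX -> R) : Prop :=
  forall x1 x2 t, Y x1 -> Y x2 ->
    a (Xadd (Xscal t x1) (Xscal (1 - t) x2)) = t * a x1 + (1 - t) * a x2.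

Definition pos_linear_on (Y : prodX -> Prop) (l : prodX -> R) : Prop :=
  (forall x y, Y x -> Y y -> l (Xadd x y) = l x + l y) /\
  (forall t x, Y x -> l (Xscal t x) = t * l x) /\
  (forall x, Y x -> Xle Xzero x -> 0 <= l x).

End Lim.

Definition increasing_fun (A : VL) (f : A -> R) : Prop :=
  forall x y, vle x y -> f x <= f y.

Arguments increasing_fun {A} f.

Definition concave_fun (A : VL) (f : A -> R) : Prop :=
  forall x y t, 0 <= t <= 1 ->
    t * f x + (1 - t) * f y <= f (vadd (vscal t x) (vscal (1 - t) y)).

Arguments concave_fun {A} f.
Arguments regular {Xs} p.
Arguments reduced {Xs} p.

(* Write [F = spf_{H,q}] with [q = q1 ∘ pr_1].  Since [q1] is increasing,
   [F x <= q1 (x_0)] < +oo; [F] is concave because convex combinations of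
   admissible [h1 <= x], [h2 <= y] are admissible for the combination of [x]
   and [y] ([H] convex, [q1] concave).

   For the dual representation on [X_0] we use the level functions
   [g_n y = sup {q h | h ∈ H, h_n <= y_n}], which are real-valued (by (ii))
   and concave on [X_0].  An algebraic Hahn-Banach theorem for concave
   functionals gives each [g_n] a supergradient at every [x], i.e. an affine
   majorant of [g_n] (hence of [F]) equal to [g_n x] at [x].  The heart of the proof is
   the compactness lemma [inf_n g_n = F] on [X_0]: near-maximizers [h^(n)] at
   each level have tail suprema [K_N = sup_(n>=N) h^(n)] in [H] (using (iii)-(iv)
   and that [H] is a lattice), and [g = limsup K_N ∈ H] satisfies [g <= x] and,
   by (v), [q g >= inf_n g_n x].  When [0 ∈ H] and [q1 0 >= 0], [g_n] is
   increasing, so its supergradients are positive and the constants are [>= 0]. *)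

From Stdlib Require Import Reals Lra Lia Classical ClassicalEpsilon FunctionalExtensionality.
From mathcomp Require classical_sets.
Open Scope R_scope.

Arguments vadd_assoc {v}. Arguments vadd_comm {v}. Arguments vadd_0 {v}.
Arguments vadd_opp {v}. Arguments vscal_1 {v}. Arguments vscal_assoc {v}.
Arguments vscal_distr_v {v}. Arguments vscal_distr_s {v}. Arguments vle_refl {v}.
Arguments vle_antisym {v}. Arguments vle_trans {v}. Arguments vle_add {v}.
Arguments vle_scal {v}. Arguments vjoin_ub1 {v}. Arguments vjoin_ub2 {v}.
Arguments vjoin_least {v}.

Section VectorLatticeAlgebra.
Variable V : VL.
Implicit Types b j x y z u v w : V.

Lemma vadd_0l x : vadd (vzero V) x = x.
Proof. rewrite vadd_comm; apply vadd_0. Qed.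

Lemma vadd_cancel_l x y z : vadd x y = vadd x z -> y = z.
Proof.
intro E.
assert (E' : vadd (vscal (-1) x) (vadd x y) = vadd (vscal (-1) x) (vadd x z))
  by now rewrite E.
rewrite !vadd_assoc, (vadd_comm (vscal (-1) x) x), vadd_opp, !vadd_0l in E'.
exact E'.
Qed.

Lemma vadd_cancel_r x y z : vadd y x = vadd z x -> y = z.
Proof. rewrite (vadd_comm y), (vadd_comm z). apply vadd_cancel_l. Qed.

Lemma vscal_0 x : vscal 0 x = vzero V.
Proof.
apply (vadd_cancel_l (vscal 0 x)). rewrite vadd_0, <- vscal_distr_s.
now rewrite Rplus_0_l.
Qed.

Lemma vscal_zero a : vscal a (vzero V) = vzero V.
Proof.
rewrite <- (vscal_0 (vzero V)) at 1. rewrite vscal_assoc, Rmult_0_r. apply vscal_0.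
Qed.

Lemma vadd_AC x y z w : vadd (vadd x y) (vadd z w) = vadd (vadd x z) (vadd y w).
Proof.
rewrite <- !vadd_assoc. f_equal. rewrite !vadd_assoc. f_equal. apply vadd_comm.
Qed.

Lemma vadd_sub x y : vadd x (vadd y (vscal (-1) x)) = y.
Proof.
rewrite vadd_assoc, (vadd_comm x y), <- vadd_assoc, vadd_opp. apply vadd_0.
Qed.

Lemma vadd_comb x t u v :
  vadd x (vadd (vscal t u) (vscal (1 - t) v)) =
  vadd (vscal t (vadd x u)) (vscal (1 - t) (vadd x v)).
Proof.
rewrite !vscal_distr_v, vadd_AC, <- vscal_distr_s.
replace (t + (1 - t)) with 1 by ring. now rewrite vscal_1.
Qed.

Lemma line_add v1 v2 s1 s2 z :
  vadd (vadd v1 (vscal s1 z)) (vadd v2 (vscal s2 z)) =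
  vadd (vadd v1 v2) (vscal (s1 + s2) z).
Proof. now rewrite vadd_AC, <- vscal_distr_s. Qed.

Lemma line_scal t v s z :
  vscal t (vadd v (vscal s z)) = vadd (vscal t v) (vscal (t * s) z).
Proof. now rewrite vscal_distr_v, vscal_assoc. Qed.

Lemma line_comb t v1 v2 s1 s2 z :
  vadd (vscal t (vadd v1 (vscal s1 z))) (vscal (1 - t) (vadd v2 (vscal s2 z))) =
  vadd (vadd (vscal t v1) (vscal (1 - t) v2)) (vscal (t * s1 + (1 - t) * s2) z).
Proof. now rewrite !line_scal, line_add. Qed.

Lemma line_diff v v' s s' z : vadd v (vscal s z) = vadd v' (vscal s' z) ->
  vadd v (vscal (-1) v') = vscal (s' - s) z.
Proof.
intro E.
assert (E' : vadd (vadd v (vscal s z)) (vadd (vscal (-1) v') (vscal (- s) z)) =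
             vadd (vadd v' (vscal s' z)) (vadd (vscal (-1) v') (vscal (- s) z)))
  by now rewrite E.
rewrite (vadd_AC v), (vadd_AC v'), <- !vscal_distr_s, vadd_opp in E'.
replace (s + - s) with 0 in E' by ring.
rewrite vscal_0, vadd_0, vadd_0l in E'.
now replace (s' - s) with (s' + - s) by ring.
Qed.

Lemma vle_sub x y : vle x y -> vle (vzero V) (vadd y (vscal (-1) x)).
Proof. intro h. rewrite <- (vadd_opp x). now apply vle_add. Qed.

Lemma vle_sub_inv x y : vle (vzero V) (vadd y (vscal (-1) x)) -> vle x y.
Proof.
intro h. apply (vle_add _ _ x) in h.
now rewrite vadd_0l, (vadd_comm _ x), vadd_sub in h.
Qed.

Lemma vjoin_absorb x y : vle y x -> vjoin x y = x.
Proof.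
intro h. apply vle_antisym; [|apply vjoin_ub1].
apply vjoin_least; [apply vle_refl | exact h].
Qed.

Lemma vle_add2 x y x' y' : vle x x' -> vle y y' -> vle (vadd x y) (vadd x' y').
Proof.
intros h1 h2. apply vle_trans with (vadd x' y); [now apply vle_add|].
rewrite (vadd_comm x' y), (vadd_comm x' y'). now apply vle_add.
Qed.

Lemma vle_comb t x y x' y' : 0 <= t <= 1 -> vle x x' -> vle y y' ->
  vle (vadd (vscal t x) (vscal (1 - t) y)) (vadd (vscal t x') (vscal (1 - t) y')).
Proof. intros ht h1 h2. apply vle_add2; apply vle_scal; auto; lra. Qed.

Lemma vle_join_low (a : V) b j : vle b j -> vle (vadd (vadd a b) (vscal (-1) j)) a.
Proof.
intro h. pose proof (vle_add b j (vadd a (vscal (-1) j)) h) as k.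
rewrite vadd_sub, vadd_assoc, (vadd_comm b a) in k.
exact k.
Qed.
End VectorLatticeAlgebra.

Arguments vadd_0l {V}. Arguments vscal_0 {V}. Arguments vscal_zero {V}.

Lemma pos_linear_mono (A B : VL) (f : A -> B) : pos_linear_map f ->
  forall x y, vle x y -> vle (f x) (f y).
Proof.
intros [fadd [fscal fpos]] x y h. apply vle_sub_inv.
rewrite <- fscal, <- fadd. apply fpos. now apply vle_sub.
Qed.

(** The product [prod_n X_n] with coordinatewise operations is again a vector
    lattice; all the algebra above therefore applies to it. *)
Definition Xjoin {Xs : nat -> VL} (x y : prodX Xs) : prodX Xs :=
  fun n => vjoin (x n) (y n).

Definition prodVL (Xs : nat -> VL) : VL.
Proof.
refine (@mkVL (prodX Xs) (@Xadd Xs) (@Xscal Xs) (Xzero Xs) (@Xle Xs) (@Xjoin Xs)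
          _ _ _ _ _ _ _ _ _ _ _ _ _ _ _ _);
  intros; try (apply functional_extensionality_dep; intro n);
  try (intro n); unfold Xadd, Xscal, Xzero, Xle, Xjoin in *.
- apply vadd_assoc.
- apply vadd_comm.
- apply vadd_0.
- apply vadd_opp.
- apply vscal_1.
- apply vscal_assoc.
- apply vscal_distr_v.
- apply vscal_distr_s.
- apply vle_refl.
- now apply vle_antisym.
- now apply vle_trans with (y n).
- now apply vle_add.
- now apply vle_scal.
- apply vjoin_ub1.
- apply vjoin_ub2.
- now apply vjoin_least.
Defined.

Lemma Rbar_le_refl a : Rbar_le a a.
Proof. destruct a; simpl; auto; lra. Qed.

Lemma Rbar_le_trans a b c : Rbar_le a b -> Rbar_le b c -> Rbar_le a c.
Proof. destruct a, b, c; simpl; auto; try lra; tauto. Qed.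

Lemma Rbar_le_antisym a b : Rbar_le a b -> Rbar_le b a -> a = b.
Proof. destruct a, b; simpl; try tauto. intros; f_equal; lra. Qed.

Lemma sup_exists (S : R -> Prop) : exists s, is_sup_Rbar S s.
Proof.
destruct (classic (exists x, S x)) as [[x0 Sx0] | empty].
- destruct (classic (exists M, forall x, S x -> x <= M)) as [bounded | unbounded].
  + destruct (completeness S bounded (ex_intro _ x0 Sx0)) as [m [ub lub]].
    exists (Fin m). split; [exact ub|].
    intros [u| |] hu; simpl.
    * apply lub. exact hu.
    * exact I.
    * exact (hu x0 Sx0).
  + exists p_infty. split; [simpl; auto|].
    intros [u| |] hu; simpl.
    * apply unbounded. exists u. exact hu.
    * exact I.
    * exact (hu x0 Sx0).
- exists m_infty. split; [|simpl; auto].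
  intros r Sr. exfalso. apply empty. now exists r.
Qed.

(* Infima are negated suprema of the reflected set. *)
Definition Rbar_opp (a : Rbar) : Rbar :=
  match a with Fin r => Fin (- r) | p_infty => m_infty | m_infty => p_infty end.

Lemma inf_exists (S : R -> Prop) : exists s, is_inf_Rbar S s.
Proof.
destruct (sup_exists (fun x => S (- x))) as [s [ub lub]].
exists (Rbar_opp s). split.
- intros r Sr. rewrite <- (Ropp_involutive r) in Sr.
  specialize (ub _ Sr). destruct s; simpl in *; auto. lra.
- intros u hu. assert (hu' : forall x, S (- x) -> Rbar_le (Fin x) (Rbar_opp u)).
  { intros x Sx. specialize (hu _ Sx). destruct u; simpl in *; auto. lra. }
  specialize (lub _ hu'). destruct s, u; simpl in *; auto; lra.
Qed.

Lemma Rbar_sup_spec S : is_sup_Rbar S (Rbar_sup S).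
Proof. unfold Rbar_sup. apply epsilon_spec, sup_exists. Qed.

Lemma Rbar_inf_spec S : is_inf_Rbar S (Rbar_inf S).
Proof. unfold Rbar_inf. apply epsilon_spec, inf_exists. Qed.

Lemma Rbar_inf_eq S a : is_inf_Rbar S a -> Rbar_inf S = a.
Proof.
intros [lb glb]. destruct (Rbar_inf_spec S) as [lb' glb'].
apply Rbar_le_antisym; [now apply glb | now apply glb'].
Qed.

Lemma sup_Fin_ub S r x : is_sup_Rbar S (Fin r) -> S x -> x <= r.
Proof. intros [ub _] Sx. exact (ub x Sx). Qed.

Lemma sup_Fin_lub S r M : is_sup_Rbar S (Fin r) -> (forall x, S x -> x <= M) -> r <= M.
Proof. intros [_ lub] hM. exact (lub (Fin M) hM). Qed.

Lemma sup_Fin_nonempty S r : is_sup_Rbar S (Fin r) -> exists x, S x.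
Proof.
intros [_ lub]. apply NNPP. intro empty. apply (lub m_infty).
intros x Sx. apply empty. now exists x.
Qed.

Lemma inf_Fin_exists (S : R -> Prop) M : (exists x, S x) -> (forall x, S x -> M <= x) ->
  exists r, is_inf_Rbar S (Fin r) /\ M <= r.
Proof.
intros [x0 Sx0] hM. destruct (inf_exists S) as [[r| |] [lb glb]].
- exists r. split; [now split|]. exact (glb (Fin M) hM).
- exfalso. exact (lb x0 Sx0).
- exfalso. exact (glb (Fin M) hM).
Qed.

Definition rsup (S : R -> Prop) : R :=
  match Rbar_sup S with Fin r => r | _ => 0 end.

Lemma rsup_spec S : (exists x, S x) -> (exists M, forall x, S x -> x <= M) ->
  is_sup_Rbar S (Fin (rsup S)).
Proof.
intros [x Sx] [M hM]. pose proof (Rbar_sup_spec S) as [ub lub]. unfold rsup.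
destruct (Rbar_sup S) as [r| |].
- now split.
- exfalso. exact (lub (Fin M) hM).
- exfalso. exact (ub x Sx).
Qed.

Lemma scal_sup_le S r t c : is_sup_Rbar S (Fin r) -> 0 <= t ->
  (forall x, S x -> t * x <= c) -> t * r <= c.
Proof.
intros sup ht hc. destruct (Req_dec t 0) as [t0 | tn].
- destruct (sup_Fin_nonempty _ _ sup) as [x Sx]. specialize (hc x Sx). subst t. lra.
- assert (bound : r <= c / t).
  { apply (sup_Fin_lub _ _ _ sup). intros x Sx. specialize (hc x Sx).
    apply (Rmult_le_reg_l t); [lra|]. field_simplify; lra. }
  apply (Rmult_le_compat_l t) in bound; [|lra]. field_simplify in bound; lra.
Qed.

Lemma comb_sup_le A B a b t c : is_sup_Rbar A (Fin a) -> is_sup_Rbar B (Fin b) ->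
  0 <= t <= 1 ->
  (forall x y, A x -> B y -> t * x + (1 - t) * y <= c) ->
  t * a + (1 - t) * b <= c.
Proof.
intros supA supB ht h.
assert (hB : forall y, B y -> (1 - t) * y <= c - t * a).
{ intros y By. enough (t * a <= c - (1 - t) * y) by lra.
  apply (scal_sup_le _ _ _ _ supA); [lra|]. intros x Ax. specialize (h x y Ax By). lra. }
enough ((1 - t) * b <= c - t * a) by lra.
apply (scal_sup_le _ _ _ _ supB); [lra | exact hB].
Qed.

(* Degenerate convex combinations in [R ∪ {±oo}] (recall [0 · (±oo) = 0]). *)
Lemma Rbar_comb_0 a b : Rbar_plus (Rbar_scal 0 a) (Rbar_scal 1 b) = b.
Proof.
destruct a, b; simpl; repeat destruct Req_EM_T; try lra; simpl; try reflexivity; f_equal; ring.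
Qed.

Lemma Rbar_comb_1 a b : Rbar_plus (Rbar_scal 1 a) (Rbar_scal 0 b) = a.
Proof.
destruct a, b; simpl; repeat destruct Req_EM_T; try lra; simpl; try reflexivity; f_equal; ring.
Qed.

Lemma le_of_approx (a m : R) (N : nat) :
  (forall M, (N <= M)%nat -> m - / INR (S M) < a) -> m <= a.
Proof.
intro h. destruct (Rle_or_lt m a) as [le | lt]; [exact le|exfalso].
destruct (archimed_cor1 (m - a) ltac:(lra)) as [K [hK Kpos]].
specialize (h (N + K)%nat ltac:(lia)).
assert (/ INR (S (N + K)) <= / INR K).
{ apply Rinv_le_contravar; [apply lt_0_INR; lia | apply le_INR; lia]. }
lra.
Qed.

(** Linear majorants defined on parts of [Y] are handled through their
    graphs; Zorn's lemma yields a maximal one, and the classical one-step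
    extension shows that a maximal one is defined on all of [Y]. *)
Section HahnBanach.
Variable V : VL.
Variable Y : V -> Prop.
Hypothesis Y_zero : Y (vzero V).
Hypothesis Y_add : forall x y, Y x -> Y y -> Y (vadd x y).
Hypothesis Y_scal : forall t x, Y x -> Y (vscal t x).
Variable G : V -> R.
Hypothesis G_concave : forall u v t, Y u -> Y v -> 0 <= t <= 1 ->
  t * G u + (1 - t) * G v <= G (vadd (vscal t u) (vscal (1 - t) v)).
Hypothesis G_zero : G (vzero V) <= 0.

(* [A] is the graph of a linear functional, defined on a subspace of [Y],
   that dominates [G]. *)
Definition partial_majorant (A : V * R -> Prop) : Prop :=
  (forall x r r', A (x, r) -> A (x, r') -> r = r') /\
  (forall x r y s, A (x, r) -> A (y, s) -> A (vadd x y, r + s)) /\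
  (forall t x r, A (x, r) -> A (vscal t x, t * r)) /\
  (forall x r, A (x, r) -> Y x /\ G x <= r).

(* The union of a chain of partial majorants is one: the hypothesis of Zorn's
   lemma. *)
Lemma partial_majorant_chain (F : (V * R -> Prop) -> Prop) :
  classical_sets.subset F partial_majorant ->
  classical_sets.total_on F classical_sets.subset ->
  partial_majorant (classical_sets.bigcup F (fun A => A)).
Proof.
intros Fmaj Ftot.
assert (common : forall A1 A2 a1 a2, F A1 -> F A2 -> A1 a1 -> A2 a2 ->
          exists A, F A /\ A a1 /\ A a2).
{ intros A1 A2 a1 a2 F1 F2 h1 h2. destruct (Ftot A1 A2 F1 F2) as [s | s].
  - exists A2. auto.
  - exists A1. auto. }
split; [|split; [|split]].
- intros x r r' [A1 F1 h1] [A2 F2 h2].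
  destruct (common _ _ _ _ F1 F2 h1 h2) as [A [FA [h h']]].
  exact (proj1 (Fmaj A FA) x r r' h h').
- intros x r y s [A1 F1 h1] [A2 F2 h2].
  destruct (common _ _ _ _ F1 F2 h1 h2) as [A [FA [h h']]].
  exists A; [exact FA|]. exact (proj1 (proj2 (Fmaj A FA)) x r y s h h').
- intros t x r [A FA h]. exists A; [exact FA|].
  exact (proj1 (proj2 (proj2 (Fmaj A FA))) t x r h).
- intros x r [A FA h]. exact (proj2 (proj2 (proj2 (Fmaj A FA))) x r h).
Qed.

Lemma trivial_majorant : partial_majorant (fun a => a = (vzero V, 0)).
Proof.
split; [|split; [|split]].
- intros x r r' h1 h2. inversion h1; inversion h2; subst. reflexivity.
- intros x r y s h1 h2. inversion h1; inversion h2; subst.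
  now rewrite vadd_0, Rplus_0_l.
- intros t x r h. inversion h; subst. now rewrite vscal_zero, Rmult_0_r.
- intros x r h. inversion h; subst. split; [exact Y_zero | exact G_zero].
Qed.

Lemma partial_majorant_zero A : partial_majorant A -> (exists a, A a) ->
  A (vzero V, 0).
Proof.
intros [_ [_ [scal _]]] [[x r] h]. pose proof (scal 0 x r h) as k.
now rewrite vscal_0, Rmult_0_l in k.
Qed.

(* One-step extension: a partial majorant [A] not defined at [z] in [Y]
   extends to the span of its domain and [z], by choosing the value [c] at [z]
   between the two bounds imposed by concavity of [G]. *)
Section Extension.
Variable A : V * R -> Prop.
Hypothesis A_majorant : partial_majorant A.
Hypothesis A_zero : A (vzero V, 0).
Variable z : V.
Hypothesis Y_z : Y z.
Hypothesis z_undefined : ~ exists r, A (z, r).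

(* The lower bounds for the value at [z] never exceed the upper bounds. *)
Lemma extension_bounds v1 r1 v2 r2 s1 s2 : A (v1, r1) -> A (v2, r2) -> 0 < s1 -> 0 < s2 ->
  (G (vadd v1 (vscal s1 z)) - r1) / s1 <= (r2 - G (vadd v2 (vscal (- s2) z))) / s2.
Proof.
intros h1 h2 p1 p2. destruct A_majorant as [_ [A_add [A_scal A_dom]]].
destruct (A_dom _ _ h1) as [Y1 _]. destruct (A_dom _ _ h2) as [Y2 _].
set (t := s2 / (s1 + s2)).
assert (ht : 0 <= t <= 1).
{ unfold t. split; [apply Rmult_le_pos; [lra | left; apply Rinv_0_lt_compat; lra]|].
  apply (Rmult_le_reg_r (s1 + s2)); [lra|]. field_simplify; lra. }
pose proof (G_concave (vadd v1 (vscal s1 z)) (vadd v2 (vscal (- s2) z)) t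
  (Y_add _ _ Y1 (Y_scal _ _ Y_z)) (Y_add _ _ Y2 (Y_scal _ _ Y_z)) ht) as conc.
rewrite line_comb in conc.
replace (t * s1 + (1 - t) * - s2) with 0 in conc by (unfold t; field; lra).
rewrite vscal_0, vadd_0 in conc.
destruct (A_dom _ _ (A_add _ _ _ _ (A_scal t _ _ h1) (A_scal (1 - t) _ _ h2))) as [_ dom].
set (a := G (vadd v1 (vscal s1 z))) in *.
set (b := G (vadd v2 (vscal (- s2) z))) in *.
assert (hk : s2 * a + s1 * b <= s2 * r1 + s1 * r2).
{ replace (s2 * a + s1 * b) with ((s1 + s2) * (t * a + (1 - t) * b)) by (unfold t; field; lra).
  replace (s2 * r1 + s1 * r2) with ((s1 + s2) * (t * r1 + (1 - t) * r2)) by (unfold t; field; lra).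
  apply Rmult_le_compat_l; lra. }
replace ((a - r1) / s1) with ((s2 * (a - r1)) * / (s1 * s2)) by (field; lra).
replace ((r2 - b) / s2) with ((s1 * (r2 - b)) * / (s1 * s2)) by (field; lra).
apply Rmult_le_compat_r; [left; apply Rinv_0_lt_compat; nra | lra].
Qed.

Definition lower_bounds (r : R) : Prop :=
  exists v r0 s, A (v, r0) /\ 0 < s /\ r = (G (vadd v (vscal s z)) - r0) / s.

Definition ext_value := rsup lower_bounds.

Lemma ext_value_spec : is_sup_Rbar lower_bounds (Fin ext_value).
Proof.
apply rsup_spec.
- exists ((G (vadd (vzero V) (vscal 1 z)) - 0) / 1). exists (vzero V), 0, 1. auto with real.
- exists ((0 - G (vadd (vzero V) (vscal (- 1) z))) / 1).
  intros x [v [r0 [s [h [sp ->]]]]]. apply extension_bounds; auto. lra.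
Qed.

Lemma ext_value_above v r s : A (v, r) -> 0 < s ->
  G (vadd v (vscal s z)) <= r + s * ext_value.
Proof.
intros h sp. assert (k : (G (vadd v (vscal s z)) - r) / s <= ext_value).
{ apply (sup_Fin_ub _ _ _ ext_value_spec). exists v, r, s. auto. }
apply (Rmult_le_compat_l s) in k; [|lra]. field_simplify in k; lra.
Qed.

Lemma ext_value_below v r s : A (v, r) -> 0 < s ->
  G (vadd v (vscal (- s) z)) <= r - s * ext_value.
Proof.
intros h sp. assert (k : ext_value <= (r - G (vadd v (vscal (- s) z))) / s).
{ apply (sup_Fin_lub _ _ _ ext_value_spec). intros x [v' [r' [s' [h' [sp' ->]]]]].
  now apply extension_bounds. }
apply (Rmult_le_compat_l s) in k; [|lra]. field_simplify in k; lra.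
Qed.

Definition extension (a : V * R) : Prop :=
  exists v r s, A (v, r) /\ fst a = vadd v (vscal s z) /\ snd a = r + s * ext_value.

Lemma extension_majorant : partial_majorant extension.
Proof.
destruct A_majorant as [A_fun [A_add [A_scal A_dom]]].
split; [|split; [|split]].
- intros x r r' [v [r0 [s [h [e1 e2]]]]] [v' [r0' [s' [h' [e1' e2']]]]].
  simpl in *. subst r r'. rewrite e1 in e1'.
  destruct (Req_dec s s') as [es | ns].
  + subst s'. apply vadd_cancel_r in e1'. subst v'. now rewrite (A_fun _ _ _ h h').
  + exfalso. apply z_undefined. apply line_diff in e1'.
    exists (/ (s' - s) * (r0 + -1 * r0')).
    replace z with (vscal (/ (s' - s)) (vadd v (vscal (-1) v'))).
    * apply A_scal, A_add; [exact h | now apply A_scal].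
    * rewrite e1', vscal_assoc. replace (/ (s' - s) * (s' - s)) with 1 by (field; lra).
      apply vscal_1.
- intros x r y s [v [r0 [s0 [h [e1 e2]]]]] [v' [r0' [s0' [h' [e1' e2']]]]].
  simpl in *. subst. exists (vadd v v'), (r0 + r0'), (s0 + s0').
  split; [now apply A_add|]. split; simpl; [apply line_add | ring].
- intros t x r [v [r0 [s0 [h [e1 e2]]]]]. simpl in *. subst.
  exists (vscal t v), (t * r0), (t * s0).
  split; [now apply A_scal|]. split; simpl; [apply line_scal | ring].
- intros x r [v [r0 [s0 [h [e1 e2]]]]]. simpl in *. subst.
  destruct (A_dom _ _ h) as [Yv Gv]. split; [now apply Y_add, Y_scal|].
  destruct (Rtotal_order s0 0) as [neg | [zer | pos]].
  + pose proof (ext_value_below v r0 (- s0) h ltac:(lra)) as k.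
    rewrite Ropp_involutive in k. lra.
  + subst. rewrite vscal_0, vadd_0. lra.
  + now apply ext_value_above.
Qed.

Lemma extension_proper : (forall a, A a -> extension a) /\ extension (z, ext_value) /\
  ~ A (z, ext_value).
Proof.
split; [|split].
- intros [x r] h. exists x, r, 0. split; [exact h|]. simpl.
  rewrite vscal_0, vadd_0. split; [reflexivity | ring].
- exists (vzero V), 0, 1. split; [exact A_zero|]. simpl.
  rewrite vscal_1, vadd_0l. split; [reflexivity | ring].
- intro h. apply z_undefined. now exists ext_value.
Qed.

End Extension.

Theorem hahn_banach : exists l : V -> R,
  (forall x y, Y x -> Y y -> l (vadd x y) = l x + l y) /\
  (forall t x, Y x -> l (vscal t x) = t * l x) /\
  (forall x, Y x -> G x <= l x).
Proof.
destruct (@classical_sets.Zorn_bigcup _ partial_majorant partial_majorant_chain)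
  as [A [A_maj A_max]].
assert (maximal : forall B, partial_majorant B -> (forall a, A a -> B a) ->
          forall a, B a -> A a).
{ intros B B_maj AB a Ba. apply NNPP. intro nA. apply (A_max B); [|exact B_maj].
  split; [exact AB|]. intro BA. exact (nA (BA a Ba)). }
assert (A_zero : A (vzero V, 0)).
{ apply partial_majorant_zero; [exact A_maj|]. apply NNPP. intro empty.
  apply empty. exists (vzero V, 0).
  apply (maximal _ trivial_majorant); [|reflexivity].
  intros a h. exfalso. apply empty. now exists a. }
assert (total : forall x, Y x -> exists r, A (x, r)).
{ intros x Yx. apply NNPP. intro undef.
  destruct (extension_proper A A_zero x undef) as [sub [ext notA]].
  exact (notA (maximal _ (extension_majorant A A_maj A_zero x Yx undef) sub _ ext)). }
set (l x := epsilon (inhabits 0) (fun r => A (x, r))).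
assert (l_graph : forall x, Y x -> A (x, l x)).
{ intros x Yx. exact (epsilon_spec (inhabits 0) (fun r => A (x, r)) (total x Yx)). }
destruct A_maj as [A_fun [A_add [A_scal A_dom]]].
exists l. split; [|split].
- intros x y Yx Yy. apply (A_fun (vadd x y)); [now apply l_graph, Y_add|].
  apply A_add; now apply l_graph.
- intros t x Yx. apply (A_fun (vscal t x)); [now apply l_graph, Y_scal|].
  apply A_scal; now apply l_graph.
- intros x Yx. exact (proj2 (A_dom _ _ (l_graph x Yx))).
Qed.
End HahnBanach.

Section ProductFacts.
Variable Xs : nat -> VL.
Implicit Types x y z : prodX Xs.

Lemma Xle_refl x : Xle x x.
Proof. exact (vle_refl (v := prodVL Xs) x). Qed.

Lemma Xle_trans x y z : Xle x y -> Xle y z -> Xle x z.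
Proof. exact (vle_trans (v := prodVL Xs) x y z). Qed.

Lemma Xle_antisym x y : Xle x y -> Xle y x -> x = y.
Proof. exact (vle_antisym (v := prodVL Xs) x y). Qed.

Lemma Xadd_0 x : Xadd x (Xzero Xs) = x.
Proof. exact (vadd_0 (v := prodVL Xs) x). Qed.

Lemma Xadd_0l x : Xadd (Xzero Xs) x = x.
Proof. exact (vadd_0l (V := prodVL Xs) x). Qed.

Lemma Xscal_0 x : Xscal 0 x = Xzero Xs.
Proof. exact (vscal_0 (V := prodVL Xs) x). Qed.

Lemma Xscal_1 x : Xscal 1 x = x.
Proof. exact (vscal_1 (v := prodVL Xs) x). Qed.

Lemma Xadd_sub x y : Xadd x (Xadd y (Xscal (-1) x)) = y.
Proof. exact (vadd_sub (prodVL Xs) x y). Qed.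

Lemma Xadd_comb x t y z :
  Xadd x (Xadd (Xscal t y) (Xscal (1 - t) z)) =
  Xadd (Xscal t (Xadd x y)) (Xscal (1 - t) (Xadd x z)).
Proof. exact (vadd_comb (prodVL Xs) x t y z). Qed.

End ProductFacts.

Section RegularLimit.
Variable Xs : nat -> VL.
Variable p : forall n, Xs (S n) -> Xs n.
Hypothesis p_regular : regular p.

Lemma p_mono n (a b : Xs (S n)) : vle a b -> vle (p n a) (p n b).
Proof. apply pos_linear_mono, p_regular. Qed.

Lemma inLim_add x y : inLim p x -> inLim p y -> inLim p (Xadd x y).
Proof.
intros hx hy n. unfold Xadd. rewrite (proj1 (proj1 (p_regular n))), <- hx, <- hy.
reflexivity.
Qed.

Lemma inLim_scal t x : inLim p x -> inLim p (Xscal t x).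
Proof.
intros hx n. unfold Xscal. rewrite (proj1 (proj2 (proj1 (p_regular n)))), <- hx.
reflexivity.
Qed.

Lemma inLim_join x y : inLim p x -> inLim p y -> inLim p (Xjoin x y).
Proof.
intros hx hy n. unfold Xjoin. rewrite (proj2 (p_regular n)), <- hx, <- hy.
reflexivity.
Qed.

Lemma inLim_descend x y n : inLim p x -> inLim p y -> vle (x n) (y n) ->
  forall j, (j <= n)%nat -> vle (x j) (y j).
Proof.
intros hx hy. induction n as [|n IH]; intros h j hj.
- replace j with 0%nat by lia. exact h.
- destruct (Nat.eq_dec j (S n)) as [-> | ne]; [exact h|].
  apply IH; [|lia]. rewrite (hx n), (hy n). now apply p_mono.
Qed.

End RegularLimit.

Section Supremal.
Variable Xs : nat -> VL.
Variable p : forall n, Xs (S n) -> Xs n.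
Variable Y : prodX Xs -> Prop.
Variable q1 : Xs O -> R.
Variable H : prodX Xs -> Prop.
Hypothesis p_regular : regular p.
Hypothesis Y_subspace : subspace p Y.
Hypothesis q1_increasing : increasing_fun q1.
Hypothesis q1_concave : concave_fun q1.
Hypothesis H_convex : convex_subset p H.
Hypothesis H_minorizing : forall n y, Y y -> exists h, H h /\ vle (h n) (y n).
Hypothesis H_decreasing_inf : forall (hs : nat -> prodX Xs) (m : R),
  (forall k, H (hs k)) -> (forall k, Xle (hs (S k)) (hs k)) ->
  is_inf_Rbar (fun r => exists k, r = qof q1 (hs k)) (Fin m) ->
  (exists b, inLim p b /\ forall k, Xle b (hs k)) /\
  (exists g, is_inf_X p (fun z => exists k, z = hs k) g /\ m <= qof q1 g).
Hypothesis H_limsup : forall hs : nat -> prodX Xs,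
  (forall k, H (hs k)) ->
  (exists l u, inLim p l /\ inLim p u /\ forall k, Xle l (hs k) /\ Xle (hs k) u) ->
  exists s : nat -> prodX Xs,
    (forall n, is_sup_X p (fun z => exists k, (n <= k)%nat /\ z = hs k) (s n)) /\
    (exists g, is_inf_X p (fun z => exists n, z = s n) g /\ H g).

Notation Q := (qof q1).

Lemma H_inLim h : H h -> inLim p h.
Proof. apply H_convex. Qed.

Lemma Y_inLim x : Y x -> inLim p x.
Proof. apply Y_subspace. Qed.

Lemma Y_zero : Y (Xzero Xs).
Proof. apply Y_subspace. Qed.

Lemma Y_add x y : Y x -> Y y -> Y (Xadd x y).
Proof. apply Y_subspace. Qed.

Lemma Y_scal t x : Y x -> Y (Xscal t x).
Proof. apply Y_subspace. Qed.

Lemma Q_mono a b : Xle a b -> Q a <= Q b.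
Proof. intro h. apply q1_increasing, h. Qed.

(* [H] is a lattice: the limsup of the alternating sequence [h1, h2, h1, ...]
   is [h1 ∨ h2], and it lies between [h1 + h2 - h1 ∨ h2] and [h1 ∨ h2]. *)
Lemma H_join h1 h2 : H h1 -> H h2 -> H (Xjoin h1 h2).
Proof.
intros H1 H2. set (J := Xjoin h1 h2).
set (alt k := if Nat.even k then h1 else h2).
assert (H_alt : forall k, H (alt k)) by (intro k; unfold alt; now destruct (Nat.even k)).
assert (alt_le : forall k, Xle (alt k) J).
{ intros k i. unfold alt. destruct (Nat.even k); [apply vjoin_ub1 | apply vjoin_ub2]. }
assert (J_lim : inLim p J) by (apply inLim_join; auto; now apply H_inLim).
set (low := Xadd (Xadd h1 h2) (Xscal (-1) J)).
assert (low_lim : inLim p low).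
{ apply inLim_add, inLim_scal; auto. apply inLim_add; auto; now apply H_inLim. }
assert (low_le : forall k, Xle low (alt k)).
{ intros k i. unfold alt, low, Xadd, Xscal. destruct (Nat.even k).
  - apply vle_join_low, vjoin_ub2.
  - rewrite (vadd_comm (h1 i)). apply vle_join_low, vjoin_ub1. }
destruct (H_limsup alt H_alt) as [s [s_sup [g [[_ [g_lb g_glb]] Hg]]]].
{ exists low, J. auto. }
assert (sJ : forall n, s n = J).
{ intro n. destruct (s_sup n) as [_ [s_ub s_lub]]. apply Xle_antisym.
  - apply s_lub; [exact J_lim|]. intros z [k [_ ->]]. apply alt_le.
  - intro i. apply vjoin_least.
    + apply (s_ub h1). exists (2 * n)%nat. unfold alt. rewrite Nat.even_even. split; auto; lia.
    + apply (s_ub h2). exists (2 * n + 1)%nat. unfold alt. rewrite Nat.even_odd. split; auto; lia. }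
replace J with g; [exact Hg|]. apply Xle_antisym.
- rewrite <- (sJ 0%nat). apply g_lb. now exists 0%nat.
- apply g_glb; [exact J_lim|]. intros z [n ->]. rewrite sJ. apply Xle_refl.
Qed.

(* Take [K_N = sup_(n >= N) hs n] (in [H] by (iii)-(iv)),
   then [g = limsup K_N]; (v) bounds [Q g] from below. *)
Section Compactness.
Variable x : prodX Xs.
Hypothesis x_lim : inLim p x.
Variable hs : nat -> prodX Xs.
Hypothesis hs_H : forall n, H (hs n).
Hypothesis hs_below : forall n, vle (hs n n) (x n).

Fixpoint tail_join (N i m : nat) : Xs i :=
  match m with
  | O => x i
  | S m' => vjoin (tail_join N i m') (if Nat.leb N m' then hs m' i else x i)
  end.

(* An element of the limit above every [hs n], [n >= N], and below [x] at
   level [N]: at level [i] only the finitely many [hs n] with [n < i] can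
   exceed [x]. *)
Definition envelope (N : nat) : prodX Xs := fun i => tail_join N i i.

Lemma tail_join_ge_x N i m : vle (x i) (tail_join N i m).
Proof.
induction m as [|m IH]; simpl; [apply vle_refl|].
eapply vle_trans; [exact IH | apply vjoin_ub1].
Qed.

Lemma tail_join_mono N i m m' : (m <= m')%nat -> vle (tail_join N i m) (tail_join N i m').
Proof.
induction 1 as [|m' _ IH]; [apply vle_refl|]. simpl.
eapply vle_trans; [exact IH | apply vjoin_ub1].
Qed.

Lemma tail_join_ge_hs N i n m : (N <= n)%nat -> (n < m)%nat -> vle (hs n i) (tail_join N i m).
Proof.
intros hN hm. apply vle_trans with (tail_join N i (S n)); [|apply tail_join_mono; lia].
simpl. replace (Nat.leb N n) with true by (symmetry; apply Nat.leb_le; lia).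
apply vjoin_ub2.
Qed.

Lemma tail_join_le_x N i m : (m <= N)%nat -> vle (tail_join N i m) (x i).
Proof.
induction m as [|m IH]; intro h; simpl; [apply vle_refl|].
replace (Nat.leb N m) with false by (symmetry; apply Nat.leb_gt; lia).
apply vjoin_least; [apply IH; lia | apply vle_refl].
Qed.

Lemma p_tail_join N i m : p i (tail_join N (S i) m) = tail_join N i m.
Proof.
induction m as [|m IH]; simpl; [symmetry; apply x_lim|].
rewrite (proj2 (p_regular i)), IH. f_equal.
destruct (Nat.leb N m); symmetry; [apply (H_inLim _ (hs_H m)) | apply x_lim].
Qed.

Lemma envelope_lim N : inLim p (envelope N).
Proof.
intro i. unfold envelope. simpl. rewrite (proj2 (p_regular i)), p_tail_join.
symmetry. apply vjoin_absorb. destruct (Nat.leb N i).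
- rewrite <- (H_inLim _ (hs_H i) i).
  eapply vle_trans; [apply hs_below | apply tail_join_ge_x].
- rewrite <- (x_lim i). apply tail_join_ge_x.
Qed.

Lemma envelope_ge N n : (N <= n)%nat -> Xle (hs n) (envelope N).
Proof.
intros h i. unfold envelope. destruct (Nat.lt_ge_cases n i) as [lt | ge].
- apply tail_join_ge_hs; lia.
- eapply vle_trans; [|apply tail_join_ge_x].
  apply (inLim_descend _ _ p_regular (hs n) x n); auto. now apply H_inLim.
Qed.

Lemma envelope_diag N : vle (envelope N N) (x N).
Proof. apply tail_join_le_x. lia. Qed.

Fixpoint partial_join (N k : nat) : prodX Xs :=
  match k with
  | O => hs N
  | S k' => Xjoin (partial_join N k') (hs (N + S k'))
  end.

Lemma partial_join_H N k : H (partial_join N k).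
Proof. induction k; simpl; auto. now apply H_join. Qed.

Lemma partial_join_mono N k k' : (k <= k')%nat -> Xle (partial_join N k) (partial_join N k').
Proof.
induction 1 as [|k' _ IH]; [apply Xle_refl|].
eapply Xle_trans; [exact IH|]. intro i; apply vjoin_ub1.
Qed.

Lemma partial_join_ge N k i : (i <= k)%nat -> Xle (hs (N + i)) (partial_join N k).
Proof.
intro h. eapply Xle_trans; [|apply (partial_join_mono N i k h)].
destruct i as [|i]; [rewrite Nat.add_0_r; apply Xle_refl|]. intro n; apply vjoin_ub2.
Qed.

Lemma partial_join_le N k b : (forall n, (N <= n)%nat -> Xle (hs n) b) ->
  Xle (partial_join N k) b.
Proof.
intro hb. induction k as [|k IH]; simpl; [apply hb; lia|].
intro i. apply vjoin_least; [apply IH | apply hb; lia].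
Qed.

(* [sup_(n >= N) hs n] exists in [X] and belongs to [H]: it is the limsup of
   the increasing sequence of partial joins. *)
Lemma tail_sup_exists N : exists K, H K /\
  (forall n, (N <= n)%nat -> Xle (hs n) K) /\
  (forall b, inLim p b -> (forall n, (N <= n)%nat -> Xle (hs n) b) -> Xle K b).
Proof.
destruct (H_limsup (partial_join N) (partial_join_H N))
  as [s [s_sup [g [[_ [g_lb g_glb]] Hg]]]].
{ exists (hs N), (envelope 0). split; [now apply H_inLim|]. split; [apply envelope_lim|].
  intro k. split.
  - rewrite <- (Nat.add_0_r N) at 1. apply partial_join_ge. lia.
  - apply partial_join_le. intros n _. apply envelope_ge. lia. }
assert (joins_le : forall k, Xle (partial_join N k) g).
{ intro k. apply g_glb; [apply H_inLim, partial_join_H|]. intros z [i ->].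
  destruct (s_sup i) as [_ [s_ub _]].
  eapply Xle_trans; [apply (partial_join_mono N k (i + k)); lia|].
  apply s_ub. exists (i + k)%nat. split; [lia | reflexivity]. }
exists g. split; [exact Hg | split].
- intros n hn. replace n with (N + (n - N))%nat by lia.
  eapply Xle_trans; [|apply (joins_le (n - N)%nat)]. apply partial_join_ge. lia.
- intros b b_lim hb. apply Xle_trans with (s 0%nat); [apply g_lb; now exists 0%nat|].
  destruct (s_sup 0%nat) as [_ [_ s_lub]]. apply s_lub; [exact b_lim|].
  intros z [k [_ ->]]. now apply partial_join_le.
Qed.

Definition tail_sup (N : nat) : prodX Xs :=
  proj1_sig (constructive_indefinite_description _ (tail_sup_exists N)).

Lemma tail_sup_spec N : H (tail_sup N) /\
  (forall n, (N <= n)%nat -> Xle (hs n) (tail_sup N)) /\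
  (forall b, inLim p b -> (forall n, (N <= n)%nat -> Xle (hs n) b) -> Xle (tail_sup N) b).
Proof. unfold tail_sup. now destruct (constructive_indefinite_description _ _). Qed.

(* The tail suprema decrease, and [K_N <= x] at level [N] because the
   envelope is an upper bound of the tail. *)
Lemma tail_sup_antitone N M : (N <= M)%nat -> Xle (tail_sup M) (tail_sup N).
Proof.
intro h. destruct (tail_sup_spec M) as [_ [_ lub]]. destruct (tail_sup_spec N) as [HN [ub _]].
apply lub; [now apply H_inLim|]. intros n hn. apply ub. lia.
Qed.

Lemma tail_sup_diag N : vle (tail_sup N N) (x N).
Proof.
destruct (tail_sup_spec N) as [_ [_ lub]].
eapply vle_trans; [|apply envelope_diag].
apply (lub (envelope N)); [apply envelope_lim | intros n hn; now apply envelope_ge].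
Qed.

Lemma compactness (m : R) : (forall n, m - / INR (S n) < Q (hs n)) ->
  exists g, H g /\ Xle g x /\ m <= Q g.
Proof.
intro approx.
assert (K_H : forall N, H (tail_sup N)) by (intro N; apply tail_sup_spec).
assert (QK : forall N, m <= Q (tail_sup N)).
{ intro N. apply (le_of_approx _ _ N). intros M hM.
  eapply Rlt_le_trans; [apply approx|]. apply Q_mono. now apply tail_sup_spec. }
destruct (inf_Fin_exists (fun r => exists k, r = Q (tail_sup k)) m) as [m' [inf_m' m_m']].
{ exists (Q (tail_sup 0%nat)). now exists 0%nat. }
{ intros r [k ->]. apply QK. }
destruct (H_decreasing_inf tail_sup m' K_H
  (fun k => tail_sup_antitone k (S k) (Nat.le_succ_diag_r k)) inf_m')
  as [[b [b_lim b_le]] [g' [[g'_lim [g'_lb _]] m'_g']]].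
destruct (H_limsup tail_sup K_H) as [s [s_sup [g [[_ [g_lb g_glb]] Hg]]]].
{ exists b, (tail_sup 0%nat). split; [exact b_lim|]. split; [now apply H_inLim|].
  intro k. split; [apply b_le | apply tail_sup_antitone; lia]. }
exists g. split; [exact Hg | split].
- intro j. apply vle_trans with (s j j); [apply g_lb; now exists j|].
  eapply vle_trans; [|apply tail_sup_diag].
  destruct (s_sup j) as [_ [_ s_lub]]. apply s_lub; [now apply H_inLim|].
  intros z [k [hk ->]]. now apply tail_sup_antitone.
- apply Rle_trans with (Q g'); [lra|]. apply Q_mono.
  apply g_glb; [exact g'_lim|]. intros z [n ->]. destruct (s_sup n) as [_ [s_ub _]].
  eapply Xle_trans; [apply g'_lb; now exists n|]. apply s_ub. now exists n.
Qed.

End Compactness.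

(* The level-[n] supremal function
   [g_n y = sup {Q h | h ∈ H, h_n <= y_n}], real-valued on [Y] by (ii) and
   since [Q h <= q1 (y_0)]. *)
Definition level_set n (y : prodX Xs) (r : R) : Prop :=
  exists h, H h /\ vle (h n) (y n) /\ r = Q h.
Definition level_sup n y := rsup (level_set n y).

Lemma level_sup_spec n y : Y y -> is_sup_Rbar (level_set n y) (Fin (level_sup n y)).
Proof.
intro Yy. apply rsup_spec.
- destruct (H_minorizing n y Yy) as [h [Hh hy]]. exists (Q h), h. auto.
- exists (q1 (y 0%nat)). intros r [h [Hh [hy ->]]]. apply q1_increasing.
  apply (inLim_descend _ _ p_regular h y n); auto; [now apply H_inLim | now apply Y_inLim | lia].
Qed.

Lemma level_sup_ge n y h : Y y -> H h -> vle (h n) (y n) -> Q h <= level_sup n y.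
Proof. intros Yy Hh hy. apply (sup_Fin_ub _ _ _ (level_sup_spec n y Yy)). now exists h. Qed.

Lemma level_sup_lub n y M : Y y -> (forall h, H h -> vle (h n) (y n) -> Q h <= M) ->
  level_sup n y <= M.
Proof.
intros Yy hM. apply (sup_Fin_lub _ _ _ (level_sup_spec n y Yy)).
intros r [h [Hh [hy ->]]]. auto.
Qed.

Lemma level_sup_mono n y y' : Y y -> Y y' -> vle (y n) (y' n) ->
  level_sup n y <= level_sup n y'.
Proof.
intros Yy Yy' hyy. apply level_sup_lub; [exact Yy|]. intros h Hh hy.
apply level_sup_ge; auto. eapply vle_trans; eauto.
Qed.

Lemma H_comb h1 h2 t : H h1 -> H h2 -> 0 <= t <= 1 ->
  H (Xadd (Xscal t h1) (Xscal (1 - t) h2)).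
Proof. intros; now apply H_convex. Qed.

Lemma level_sup_concave n u v t : Y u -> Y v -> 0 <= t <= 1 ->
  t * level_sup n u + (1 - t) * level_sup n v <=
  level_sup n (Xadd (Xscal t u) (Xscal (1 - t) v)).
Proof.
intros Yu Yv ht.
apply (comb_sup_le _ _ _ _ _ _ (level_sup_spec n u Yu) (level_sup_spec n v Yv) ht).
intros r1 r2 [h1 [H1 [l1 ->]]] [h2 [H2 [l2 ->]]].
eapply Rle_trans; [now apply q1_concave|].
apply (level_sup_ge n _ (Xadd (Xscal t h1) (Xscal (1 - t) h2))).
- apply Y_add; now apply Y_scal.
- now apply H_comb.
- now apply vle_comb.
Qed.

(* Each [g_n] has a supergradient at every point of [Y]: Hahn-Banach applied
   to the concave function [v ↦ g_n (x + v) - g_n x], which vanishes at 0. *)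
Lemma level_sup_supergradient n x : Y x -> exists l : prodX Xs -> R,
  (forall u v, Y u -> Y v -> l (Xadd u v) = l u + l v) /\
  (forall t u, Y u -> l (Xscal t u) = t * l u) /\
  (forall y, Y y -> level_sup n y <= level_sup n x + l y - l x).
Proof.
intro Yx.
assert (shifted_concave : forall u v t, Y u -> Y v -> 0 <= t <= 1 ->
  t * (level_sup n (Xadd x u) - level_sup n x) +
  (1 - t) * (level_sup n (Xadd x v) - level_sup n x) <=
  level_sup n (Xadd x (Xadd (Xscal t u) (Xscal (1 - t) v))) - level_sup n x).
{ intros u v t Yu Yv ht. rewrite Xadd_comb.
  pose proof (level_sup_concave n (Xadd x u) (Xadd x v) t (Y_add _ _ Yx Yu) (Y_add _ _ Yx Yv) ht).
  lra. }
destruct (hahn_banach (prodVL Xs) Y Y_zero Y_add Y_scal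
  (fun v => level_sup n (Xadd x v) - level_sup n x) shifted_concave)
  as [l [l_add [l_scal l_major]]].
{ simpl. rewrite Xadd_0. lra. }
assert (l_add' : forall u v, Y u -> Y v -> l (Xadd u v) = l u + l v) by exact l_add.
assert (l_scal' : forall t u, Y u -> l (Xscal t u) = t * l u) by exact l_scal.
exists l. split; [exact l_add' | split; [exact l_scal'|]]. intros y Yy.
assert (Y_diff : Y (Xadd y (Xscal (-1) x))) by (apply Y_add, Y_scal; auto).
specialize (l_major _ Y_diff). cbv beta in l_major.
rewrite Xadd_sub, (l_add' _ _ Yy (Y_scal _ _ Yx)), (l_scal' _ _ Yx) in l_major. lra.
Qed.

(* A common lower bound [m] of all the [g_n x] is attained by some [h <= x]:
   pick near-maximizers at each level and apply [compactness]. *)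
Lemma level_sup_attained x m : Y x -> (forall n, m <= level_sup n x) ->
  exists g, H g /\ Xle g x /\ m <= Q g.
Proof.
intros Yx hm.
assert (near : forall n, exists h, H h /\ vle (h n) (x n) /\ m - / INR (S n) < Q h).
{ intro n. apply NNPP. intro none.
  assert (level_sup n x <= m - / INR (S n)).
  { apply level_sup_lub; [exact Yx|]. intros h Hh hx. apply Rnot_lt_le. intro lt.
    apply none. now exists h. }
  specialize (hm n). assert (0 < / INR (S n)) by (apply Rinv_0_lt_compat, lt_0_INR; lia).
  lra. }
destruct (choice _ near) as [hs hs_spec].
apply (compactness x (Y_inLim x Yx) hs); intro n; apply hs_spec.
Qed.

Notation F := (spf H Q).

Lemma spf_ge h x : H h -> Xle h x -> Rbar_le (Fin (Q h)) (F x).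
Proof. intros Hh hx. apply (Rbar_sup_spec _). now exists h. Qed.

Lemma spf_le x M : (forall h, H h -> Xle h x -> Q h <= M) -> Rbar_le (F x) (Fin M).
Proof. intro hM. apply (Rbar_sup_spec _). intros r [h [Hh [hx ->]]]. now apply hM. Qed.

(* [spf] never takes the value [+oo]: it is bounded by [q1 (x_0)]. *)
Lemma spf_not_p_infty x : F x <> p_infty.
Proof.
intro e. pose proof (spf_le x (q1 (x 0%nat))) as k. rewrite e in k. apply k.
intros h Hh hx. apply q1_increasing, hx.
Qed.

(* Concavity: convex combinations of admissible [h1 <= x], [h2 <= y] are
   admissible for the combination of [x] and [y]; the cases [t = 0, 1] are
   separated because of the convention [0 · (-oo) = 0]. *)
Lemma spf_concave : concave_Rbar p F.
Proof.
intros x y t lx ly ht.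
destruct (Req_dec t 0) as [-> | t0].
{ rewrite Rminus_0_r, Xscal_0, Xscal_1, Xadd_0l, Rbar_comb_0. apply Rbar_le_refl. }
destruct (Req_dec t 1) as [-> | t1].
{ rewrite Rminus_diag, Xscal_0, Xscal_1, Xadd_0, Rbar_comb_1. apply Rbar_le_refl. }
assert (comb : forall h1 h2, H h1 -> Xle h1 x -> H h2 -> Xle h2 y ->
  Rbar_le (Fin (t * Q h1 + (1 - t) * Q h2)) (F (Xadd (Xscal t x) (Xscal (1 - t) y)))).
{ intros h1 h2 H1 l1 H2 l2.
  eapply Rbar_le_trans; [|apply (spf_ge (Xadd (Xscal t h1) (Xscal (1 - t) h2)))].
  - simpl. apply q1_concave. lra.
  - apply H_comb; auto; lra.
  - intro n. apply vle_comb; auto; lra. }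
pose proof (Rbar_sup_spec (fun r => exists h, H h /\ Xle h x /\ r = Q h)) as sup_x.
pose proof (Rbar_sup_spec (fun r => exists h, H h /\ Xle h y /\ r = Q h)) as sup_y.
change (is_sup_Rbar (fun r => exists h, H h /\ Xle h x /\ r = Q h) (F x)) in sup_x.
change (is_sup_Rbar (fun r => exists h, H h /\ Xle h y /\ r = Q h) (F y)) in sup_y.
pose proof (spf_not_p_infty x) as fin_x. pose proof (spf_not_p_infty y) as fin_y.
destruct (F x) as [a| |]; [|contradiction | simpl; destruct Req_EM_T; [lra | exact I]].
destruct (F y) as [b| |]; [|contradiction | simpl; destruct Req_EM_T; [lra | exact I]].
destruct (sup_Fin_nonempty _ _ sup_x) as [r1 [h1 [H1 [l1 _]]]].
destruct (sup_Fin_nonempty _ _ sup_y) as [r2 [h2 [H2 [l2 _]]]].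
destruct (F (Xadd (Xscal t x) (Xscal (1 - t) y))) as [c| |];
  [|exact I | exact (comb h1 h2 H1 l1 H2 l2)].
apply (comb_sup_le _ _ _ _ _ _ sup_x sup_y); [lra|].
intros r1' r2' [h1' [H1' [l1' ->]]] [h2' [H2' [l2' ->]]].
exact (comb h1' h2' H1' l1' H2' l2').
Qed.

(* On [Y], [spf = inf_n g_n]: any common lower bound of the [g_n x] is below
   [spf x]. *)
Lemma spf_ge_levels x u : Y x -> (forall n, Rbar_le u (Fin (level_sup n x))) ->
  Rbar_le u (F x).
Proof.
intros Yx hu. destruct u as [r| |].
- destruct (level_sup_attained x r Yx hu) as [g [Hg [gx rg]]].
  eapply Rbar_le_trans; [|apply (spf_ge g x Hg gx)]. exact rg.
- destruct (hu 0%nat).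
- exact I.
Qed.

(* Each [a] in the family dominates [spf] by definition; conversely the
   supergradients of the [g_n] give affine majorants [g_n x + l (· - x)]
   taking the value [g_n x] at [x], and [inf_n g_n x = spf x]. *)
Lemma spf_affine_dual x : Y x ->
  F x = Rbar_inf (fun r => exists a : prodX Xs -> R,
    affine_on Y a /\ (forall h x', H h -> Y x' -> Xle h x' -> Q h <= a x') /\ r = a x).
Proof.
intro Yx. symmetry. apply Rbar_inf_eq. split.
- intros r [a [_ [ha ->]]]. apply spf_le. intros h Hh hx. now apply ha.
- intros u hu. apply spf_ge_levels; [exact Yx|]. intro n.
  destruct (level_sup_supergradient n x Yx) as [l [l_add [l_scal l_super]]].
  apply hu. exists (fun y => level_sup n x + l y - l x). split; [|split].
  + intros x1 x2 t Y1 Y2. rewrite l_add, !l_scal by (auto; now apply Y_scal). ring.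
  + intros h x' Hh Yx' hx'. eapply Rle_trans; [|now apply l_super].
    now apply level_sup_ge.
  + ring.
Qed.

Lemma spf_nonneg : H (Xzero Xs) -> 0 <= q1 (vzero (Xs O)) ->
  forall x, Xle (Xzero Xs) x -> Rbar_le (Fin 0) (F x).
Proof.
intros H0 q0 x hx. eapply Rbar_le_trans; [|apply (spf_ge (Xzero Xs) x H0 hx)]. exact q0.
Qed.

(* Under the same assumptions the supergradients of the [g_n] are positive
   ([g_n] is increasing) and [g_n x - l x >= g_n 0 >= q1 0 >= 0], so the
   affine majorants can be taken of the form [l + c] with [l] positive
   linear and [c >= 0]. *)
Lemma spf_positive_dual : H (Xzero Xs) -> 0 <= q1 (vzero (Xs O)) ->
  forall x, Y x ->
  F x = Rbar_inf (fun r => exists (l : prodX Xs -> R) (c : R),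
    pos_linear_on Y l /\ 0 <= c /\
    (forall h x', H h -> Y x' -> Xle h x' -> Q h <= l x' + c) /\ r = l x + c).
Proof.
intros H0 q0 x Yx. symmetry. apply Rbar_inf_eq. split.
- intros r [l [c [_ [_ [hl ->]]]]]. apply spf_le. intros h Hh hx. now apply hl.
- intros u hu. apply spf_ge_levels; [exact Yx|]. intro n.
  destruct (level_sup_supergradient n x Yx) as [l [l_add [l_scal l_super]]].
  assert (l_zero : l (Xzero Xs) = 0).
  { rewrite <- (Xscal_0 Xs (Xzero Xs)), l_scal; [ring | apply Y_zero]. }
  assert (g0 : q1 (vzero (Xs O)) <= level_sup n (Xzero Xs)).
  { apply (level_sup_ge n _ (Xzero Xs) Y_zero H0). apply vle_refl. }
  apply hu. exists l, (level_sup n x - l x). split; [|split; [|split]].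
  + split; [exact l_add | split; [exact l_scal|]]. intros y Yy hy.
    pose proof (l_super (Xadd x y) (Y_add _ _ Yx Yy)) as super_xy.
    rewrite l_add in super_xy by auto.
    assert (mono : level_sup n x <= level_sup n (Xadd x y)).
    { apply level_sup_mono; [exact Yx | now apply Y_add|].
      pose proof (vle_add _ _ (x n) (hy n)) as shift.
      unfold Xzero in shift. now rewrite vadd_0l, vadd_comm in shift. }
    lra.
  + pose proof (l_super (Xzero Xs) Y_zero) as super_0. rewrite l_zero in super_0. lra.
  + intros h x' Hh Yx' hx'. apply Rle_trans with (level_sup n x'); [now apply level_sup_ge|].
    specialize (l_super x' Yx'). lra.
  + ring.
Qed.

End Supremal.

Theorem mainTheorem10 (Xs : nat -> VL) (p : forall n, Xs (S n) -> Xs n)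
  (Y : prodX Xs -> Prop) (q1 : Xs O -> R) (H : prodX Xs -> Prop) :
  regular p -> reduced p ->
  subspace p Y ->
  increasing_fun q1 -> concave_fun q1 ->
  convex_subset p H ->
  (* (ii) H_n = pr_n H is minorizing for pr_n X_0 *)
  (forall n y, Y y -> exists h, H h /\ vle (h n) (y n)) ->
  (* (v) *)
  (forall (hs : nat -> prodX Xs) (m : R),
     (forall k, H (hs k)) -> (forall k, Xle (hs (S k)) (hs k)) ->
     is_inf_Rbar (fun r => exists k, r = qof q1 (hs k)) (Fin m) ->
     (exists b, inLim p b /\ forall k, Xle b (hs k)) /\
     (exists g, is_inf_X p (fun z => exists k, z = hs k) g /\ m <= qof q1 g)) ->
  (* (iii)-(iv) *)
  (forall hs : nat -> prodX Xs,
     (forall k, H (hs k)) ->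
     (exists l u, inLim p l /\ inLim p u /\
        forall k, Xle l (hs k) /\ Xle (hs k) u) ->
     exists s : nat -> prodX Xs,
       (forall n, is_sup_X p (fun z => exists k, (n <= k)%nat /\ z = hs k) (s n)) /\
       (exists g, is_inf_X p (fun z => exists n, z = s n) g /\ H g)) ->
  (forall x, inLim p x -> spf H (qof q1) x <> p_infty) /\
  concave_Rbar p (spf H (qof q1)) /\
  (forall x, Y x ->
     spf H (qof q1) x =
     Rbar_inf (fun r => exists a : prodX Xs -> R,
        affine_on Y a /\
        (forall h x', H h -> Y x' -> Xle h x' -> qof q1 h <= a x') /\
        r = a x)) /\
  (H (Xzero Xs) -> 0 <= q1 (vzero (Xs O)) ->
     (forall x, inLim p x -> Xle (Xzero Xs) x -> Rbar_le (Fin 0) (spf H (qof q1) x)) /\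
     (forall x, Y x ->
        spf H (qof q1) x =
        Rbar_inf (fun r => exists (l : prodX Xs -> R) (c : R),
           pos_linear_on Y l /\ 0 <= c /\
           (forall h x', H h -> Y x' -> Xle h x' -> qof q1 h <= l x' + c) /\
           r = l x + c))).
Proof.
intros p_reg _ Y_sub q1_inc q1_conc H_conv H_min H_inf H_lsup.
split; [|split; [|split]].
- intros x _. apply spf_not_p_infty, q1_inc.
- now apply spf_concave.
- intros x Yx. now apply (spf_affine_dual _ p Y).
- intros H0 q0. split.
  + intros x _ hx. now apply spf_nonneg.
  + intros x Yx. now apply (spf_positive_dual _ p Y).
Qed.
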